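(* Let $X\in\mathbb{R}^{n\times d}$ with $X^TX$ invertible, let $y\in\{0,1\}^n$, and let $k\ge1$ be an integer. Let $g(s)=s(1-s)$, applied element-wise. For $\hat\sigma,v\in\mathbb{R}^n$ define $s^{(0)}=\hat\sigma$, $s^{(j)}=s^{(j-1)}+k^{-1}v\circ g(s^{(j-1)})$ for $j=1,\dots,k$, and $\tilde g_k(\hat\sigma,v)=k^{-1}\sum_{j=0}^{k-1}g(s^{(j)})$. Consider the iteration $$\beta_0=0,\quad \hat\sigma_0=\tfrac12\mathbf{1},\quad \Delta_t=4(X^TX)^{-1}X^T(y-\hat\sigma_t),\quad \beta_{t+1}=\beta_t+\Delta_t,\quad \hat\sigma_{t+1}=\hat\sigma_t+X\Delta_t\circ\tilde g_k(\hat\sigma_t,X\Delta_t).$$ Suppose there is $\tau<1$ such that for every $t\ge0$, $k^{-1}|X\Delta_t|\le\tau$ element-wise. Then for every $t\ge0$ every entry of $\hat\sigma_t$ lies in the open interval $(0,1)$.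
   Context: $\circ$ is the element-wise product, $|\cdot|$ of a vector is taken element-wise, and $\mathbf{1}$ is the all-ones vector. Note $\hat\sigma_{t+1}$ equals the $k$-th inner iterate $s^{(k)}$ started from $\hat\sigma_t$ with $v=X\Delta_t$, i.e. $k$ forward-Euler steps of size $k^{-1}X\Delta_t$ for the ODE $\sigma'=\sigma(1-\sigma)$. *)

(* R is an arbitrary realFieldType (the paper uses the reals). *)
From mathcomp Require Import all_boot all_order all_algebra.
Set Implicit Arguments. Unset Strict Implicit. Unset Printing Implicit Defensive.
Import Order.TTheory GRing.Theory Num.Theory.
Local Open Scope ring_scope.

Section Defs.
Variable R : realFieldType.

Definition gfun (s : R) : R := s * (1 - s).

Definition gvec n (s : 'cV[R]_n) : 'cV[R]_n := \col_i gfun (s i 0).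

Definition hadamard n (u v : 'cV[R]_n) : 'cV[R]_n := \col_i (u i 0 * v i 0).

Fixpoint s_iter n (k : nat) (sh v : 'cV[R]_n) (j : nat) : 'cV[R]_n :=
  match j with
  | 0 => sh
  | j'.+1 => let s := s_iter k sh v j' in
             s + (k%:R)^-1 *: hadamard v (gvec s)
  end.

Definition gtilde n (k : nat) (sh v : 'cV[R]_n) : 'cV[R]_n :=
  (k%:R)^-1 *: \sum_(j < k) gvec (s_iter k sh v j).

Definition delta n d (X : 'M[R]_(n, d)) (y sig : 'cV[R]_n) : 'cV[R]_d :=
  4%:R *: (invmx (X^T *m X) *m (X^T *m (y - sig))).

Fixpoint state n d (X : 'M[R]_(n, d)) (y : 'cV[R]_n) (k : nat) (t : nat)
  : 'cV[R]_d * 'cV[R]_n :=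
  match t with
  | 0 => (0, const_mx (2%:R)^-1)
  | t'.+1 =>
      let '(b, sig) := state X y k t' in
      let D := delta X y sig in
      (b + D, sig + hadamard (X *m D) (gtilde k sig (X *m D)))
  end.

Definition beta n d (X : 'M[R]_(n, d)) y k t := (state X y k t).1.
Definition sigma n d (X : 'M[R]_(n, d)) y k t := (state X y k t).2.
Definition Delta n d (X : 'M[R]_(n, d)) y k t := delta X y (sigma X y k t).

End Defs.

From mathcomp Require Import all_boot all_order all_algebra.
From mathcomp Require Import ring lra.
Import Order.TTheory GRing.Theory Num.Theory.
Local Open Scope ring_scope.

(* The update of sigma_t is exactly k forward-Euler steps of size k^-1 (X Delta_t)
   for the logistic ODE s' = s (1 - s), performed coordinatewise.  A single step
   s + c s (1 - s) with |c| < 1 maps (0, 1) into itself, since it equals both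
   s (1 + c (1 - s)) and 1 - (1 - s) (1 - c s).  The step bound k^-1 |X Delta_t| <= tau < 1
   therefore keeps every iterate in (0, 1). *)

Lemma logistic_step_in01 (R : realFieldType) (c s : R) :
  -1 < c < 1 -> 0 < s < 1 -> 0 < s + c * gfun s < 1.
Proof.
rewrite /gfun => /andP[c_gt c_lt] /andP[s_gt0 s_lt1]; apply/andP; split.
- have -> : s + c * (s * (1 - s)) = s * (1 + c * (1 - s)) by ring.
  by apply: mulr_gt0 => //; nra.
- have : 0 < (1 - s) * (1 - c * s) by apply: mulr_gt0; nra.
  nra.
Qed.

Section EulerIterates.
Variables (R : realFieldType) (n k : nat) (sh v : 'cV[R]_n).

Lemma s_iterS_coord j i :
  s_iter k sh v j.+1 i 0 =
  s_iter k sh v j i 0 + (k%:R)^-1 * v i 0 * gfun (s_iter k sh v j i 0).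
Proof. by rewrite /= !mxE mulrA. Qed.

Lemma s_iter_in01 i :
  -1 < (k%:R)^-1 * v i 0 < 1 -> 0 < sh i 0 < 1 ->
  forall j, 0 < s_iter k sh v j i 0 < 1.
Proof.
move=> c_bd sh_in; elim=> [//|j IHj].
by rewrite s_iterS_coord; apply: logistic_step_in01.
Qed.

Lemma s_iter_sum j :
  s_iter k sh v j = sh + hadamard v ((k%:R)^-1 *: \sum_(l < j) gvec (s_iter k sh v l)).
Proof.
elim: j => [|j IHj].
  by apply/matrixP => i l; rewrite !mxE big_ord0 !mxE; ring.
apply/matrixP => i l; rewrite /= {1}IHj !mxE big_ord_recr /= !mxE.
rewrite (ord1 l); ring.
Qed.

Lemma s_iter_gtilde : s_iter k sh v k = sh + hadamard v (gtilde k sh v).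
Proof. exact: s_iter_sum. Qed.

End EulerIterates.

Lemma sigmaS_s_iter (R : realFieldType) n d (X : 'M[R]_(n, d)) y k t :
  sigma X y k t.+1 = s_iter k (sigma X y k t) (X *m Delta X y k t) k.
Proof.
rewrite s_iter_gtilde /Delta /sigma /=.
by case: (state X y k t).
Qed.

Lemma sigma0_in01 (R : realFieldType) n d (X : 'M[R]_(n, d)) y k i :
  0 < sigma X y k 0 i 0 < 1.
Proof.
rewrite /sigma /= mxE invr_gt0 ltr0n /=.
by rewrite invf_lt1 ?ltr0n // ltr1n.
Qed.

Theorem lemma5 (R : realFieldType) (n d : nat) (X : 'M[R]_(n, d))
  (y : 'cV[R]_n) (k : nat) (tau : R) :
  X^T *m X \in unitmx ->
  (forall i, y i 0 = 0 \/ y i 0 = 1) ->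
  (1 <= k)%N ->
  tau < 1 ->
  (forall t i, (k%:R)^-1 * `|(X *m Delta X y k t) i 0| <= tau) ->
  forall t i, 0 < sigma X y k t i 0 < 1.
Proof.
move=> _ _ _ tau_lt1 step_bd; elim=> [|t IHt] i; first exact: sigma0_in01.
rewrite sigmaS_s_iter; apply: s_iter_in01 => //.
have := step_bd t i.
have k_inv_ge0 : 0 <= (k%:R : R)^-1 by rewrite invr_ge0 ler0n.
rewrite -ltr_norml normrM ger0_norm //; lra.
Qed.
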